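(* Assume Assumption (S) of the context. Let $u_h(\cdot,t)\in\mathbb V^k$ and let numerical flux values $\hat f_{i,j}$ ($j=0,\dots,k+1$, for every cell $i$) be given, with $\hat f_{i,0}=\hat f_{i-\frac12}$ and $\hat f_{i,k+1}=\hat f_{i+\frac12}$ the interface fluxes. Then the semi-discrete spectral volume relations $$((u_h)_t,\omega^* )=\sum_i\sum_{j=0}^k\omega^*_{i,j}(\hat f_{i,j}-\hat f_{i,j+1})\quad\forall\omega^*\in\mathbb V^{k,*}$$ hold if and only if $$((u_h)_t,\omega)_*=\sum_i\Big(Q_i^k(\hat f\omega_x)+\omega(x_{i-\frac12}^+)\hat f_{i-\frac12}-\omega(x_{i+\frac12}^-)\hat f_{i+\frac12}\Big)\quad\forall\omega\in\mathbb V^k,$$ where $Q_i^k(\hat f\omega_x):=\sum_{j=0}^{k+1}A_{i,j}\hat f_{i,j}\,(\omega|_{I_i})'(x_{i,j})$.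
   Context: Let $\Omega=[a,b]$ be partitioned into finitely many cells $I_i=[x_{i-\frac12},x_{i+\frac12}]$ with sizes $h_i$. $(\cdot,\cdot)$ is the $L^2(\Omega)$ inner product, $(\cdot,\cdot)_{I_i}$ the $L^2(I_i)$ inner product. $\mathbb V^k=\{v\in L^2(\Omega): v|_{I_i}\in\mathbb P^k(I_i)\ \forall i\}$. Each $I_i$ has subdivision points $x_{i-\frac12}=x_{i,0}<x_{i,1}<\dots<x_{i,k}<x_{i,k+1}=x_{i+\frac12}$, control volumes $I_{i,j}=[x_{i,j},x_{i,j+1}]$, $j=0,\dots,k$; $\mathbb V^{k,*}$ is the space of functions constant on each $I_{i,j}$, and $\omega^*_{i,j}$ is the value of $\omega^*$ on $I_{i,j}$. On each $I_i$ a quadrature $Q_i^k(v)=\sum_{j=0}^{k+1}A_{i,j}v(x_{i,j})$ is given with error $R_i^k(v)=\int_{I_i}v\,dx-Q_i^k(v)$, exact on $\mathbb P^{k-1}(I_i)$. $M^*:\mathbb V^k\to\mathbb V^{k,*}$ is defined cellwise: for $v=\omega|_{I_i}$, $(M^*\omega)|_{I_{i,0}}=v(x_{i-\frac12})+A_{i,0}v'(x_{i-\frac12})$ and $(M^*\omega)|_{I_{i,j}}-(M^*\omega)|_{I_{i,j-1}}=A_{i,j}v'(x_{i,j})$, $j=1,\dots,k$ (one-sided values from inside $I_i$). $\omega(x^\pm)$ denote right/left limits. $L_{i,\ell}$ is the shifted Legendre polynomial of degree $\ell$ on $I_i$ with $L_{i,\ell}(x_{i+\frac12})=1$, $(L_{i,\ell},L_{i,m})_{I_i}=\delta_{\ell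 m}h_i/(2\ell+1)$. Assumption (S): $k\ge1$ and for every $i$, (1) $R_i^k(v)=0$ for all $v\in\mathbb P^{2k-1}(I_i)$, and (2) $\frac{h_i}{2k-1}-Q_i^k(L_{i,k+1}L_{i,k-1})>0$. Under (S), $(v,\omega)_*:=(v,M^*\omega)$ is an inner product on $\mathbb V^k$. *)

From HB Require Import structures.
From mathcomp Require Import all_boot all_order all_algebra.
Set Implicit Arguments. Unset Strict Implicit. Unset Printing Implicit Defensive.
Import Order.TTheory GRing.Theory Num.Theory.
Local Open Scope ring_scope.

Section SV.
Variable R : realFieldType.

Definition prim (p : {poly R}) : {poly R} :=
  \poly_(i < (size p).+1) (if i is j.+1 then p`_j / j.+1%:R else 0).

Definition pint (p : {poly R}) (a b : R) : R := (prim p).[b] - (prim p).[a].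

(* Legendre polynomials on [-1,1]: legpair n = (P_n, P_{n+1}) via Bonnet's recursion *)
Fixpoint legpair (n : nat) : {poly R} * {poly R} :=
  match n with
  | 0 => (1, 'X)
  | m.+1 => let: (p, q) := legpair m in
            (q, (m.+2%:R)^-1 *: ((2 * m + 3)%N%:R *: ('X * q) - m.+1%:R *: p))
  end.
Definition legendre (n : nat) : {poly R} := (legpair n).1.

(* shifted Legendre polynomial of degree n on [a,b], with value 1 at b *)
Definition shifted_legendre (a b : R) (n : nat) : {poly R} :=
  legendre n \Po ((2 / (b - a)) *: 'X - ((a + b) / (b - a))%:P).

(* Cells i : 'I_N; subdivision points x i j (j = 0..k+1), x i 0 = x_{i-1/2},
   x i k.+1 = x_{i+1/2}; quadrature weights A i j (j = 0..k+1).
   An element of V^k is a family w : 'I_N -> {poly R} with size (w i) <= k+1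
   (w i = the restriction to I_i). An element of V^{k,*} is a family
   ws : 'I_N -> nat -> R, ws i j = value on I_{i,j} (j = 0..k). *)

Definition quad (k N : nat) (x A : 'I_N -> nat -> R) (i : 'I_N) (p : {poly R}) : R :=
  \sum_(j < k.+2) A i j * p.[x i j].

Definition l2_star (k N : nat) (x : 'I_N -> nat -> R) (v : 'I_N -> {poly R})
  (ws : 'I_N -> nat -> R) : R :=
  \sum_(i < N) \sum_(j < k.+1) ws i j * pint (v i) (x i j) (x i j.+1).

Definition Mstar (N : nat) (x A : 'I_N -> nat -> R) (w : 'I_N -> {poly R})
  : 'I_N -> nat -> R :=
  fun i j => (w i).[x i 0] + \sum_(m < j.+1) A i m * (w i)^`().[x i m].

Definition ip_star (k N : nat) (x A : 'I_N -> nat -> R) (v w : 'I_N -> {poly R}) : R :=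
  l2_star k x v (Mstar x A w).

Definition quad_flux (k N : nat) (x A fhat : 'I_N -> nat -> R) (w : 'I_N -> {poly R})
  (i : 'I_N) : R :=
  \sum_(j < k.+2) A i j * fhat i j * (w i)^`().[x i j].

End SV.

(* Everything happens cell by cell. Summation by parts, with the quadrature exact
   on w' (degree < k), rewrites sum_j (M^* w)_j (f_j - f_(j+1)) as the quadrature
   flux form; this is one direction. For the converse it suffices that M^* maps
   P^k onto R^(k+1), i.e. that it is injective. If M^* w = 0, the quadrature of
   w' g only sees the end nodes, and integration by parts against g = prim q
   shows w orthogonal to P^(k-1), hence w = c L_k. Computing the quadrature error
   of w' (prim w) through its leading coefficient determines the error on X^(2k),
   and with it condition (2) of (S) reads 0 < 0 unless c = 0. *)

From HB Require Import structures.
From mathcomp Require Import all_boot all_order all_algebra.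
From mathcomp Require Import ring lra zify.
Set Implicit Arguments. Unset Strict Implicit. Unset Printing Implicit Defensive.
Import Order.TTheory GRing.Theory Num.Theory.
Local Open Scope ring_scope.

Section PolyIntegral.
Variable R : realFieldType.
Implicit Types (p q F : {poly R}) (a b : R).

Lemma deriv_eq0 p : p^`() = 0 -> p = (p`_0)%:P.
Proof.
move=> dp0; apply/polyP => -[|i]; rewrite coefC //=.
have /eqP := congr1 (coefp i) dp0; rewrite /= coef_deriv coef0.
by rewrite -mulr_natr mulf_eq0 pnatr_eq0 orbF => /eqP.
Qed.

Lemma coef_prim p i : (prim p)`_i.+1 = p`_i / i.+1%:R.
Proof.
rewrite coef_poly ltnS; case: ltnP => // le_pi.
by rewrite nth_default ?mul0r.
Qed.

Lemma deriv_prim p : (prim p)^`() = p.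
Proof.
apply/polyP => i; rewrite coef_deriv coef_prim.
by set m := i.+1%:R; rewrite -mulr_natr divfK // /m pnatr_eq0.
Qed.

Lemma size_prim p : (size (prim p) <= (size p).+1)%N.
Proof. exact: size_poly. Qed.

Lemma size_deriv_le p n : (size p <= n.+1)%N -> (size p^`() <= n)%N.
Proof.
move=> le_pn; apply/leq_sizeP => j le_nj.
by rewrite coef_deriv nth_default ?mul0rn // (leq_trans le_pn).
Qed.

Lemma pint_antiderivative F p a b : F^`() = p -> pint p a b = F.[b] - F.[a].
Proof.
move=> dF; have /deriv_eq0 : (prim p - F)^`() = 0 by rewrite derivB deriv_prim dF subrr.
by rewrite /pint => /(canRL (subrK F)) ->; rewrite !hornerD !hornerC; ring.
Qed.

Lemma pint_deriv F a b : pint F^`() a b = F.[b] - F.[a].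
Proof. exact: pint_antiderivative. Qed.

Lemma pintD p q a b : pint (p + q) a b = pint p a b + pint q a b.
Proof.
rewrite (@pint_antiderivative (prim p + prim q)) ?derivD ?deriv_prim //.
by rewrite /pint !hornerD; ring.
Qed.

Lemma pintZ c p a b : pint (c *: p) a b = c * pint p a b.
Proof.
rewrite (@pint_antiderivative (c *: prim p)) ?derivZ ?deriv_prim //.
by rewrite /pint !hornerZ; ring.
Qed.

Lemma pintB p q a b : pint (p - q) a b = pint p a b - pint q a b.
Proof. by rewrite pintD -scaleN1r pintZ mulN1r. Qed.

Lemma pint0 a b : pint 0 a b = 0.
Proof. by rewrite -(scale0r 0) pintZ mul0r. Qed.

Lemma pint_by_parts p q a b :
  pint (p^`() * q) a b = (p * q).[b] - (p * q).[a] - pint (p * q^`()) a b.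
Proof. by rewrite -pint_deriv derivM pintD; ring. Qed.

Lemma pint_comp_affine p s t a b : s != 0 ->
  pint (p \Po (s *: 'X - t%:P)) a b = s^-1 * pint p (s * a - t) (s * b - t).
Proof.
move=> s_neq0.
rewrite (@pint_antiderivative (s^-1 *: (prim p \Po (s *: 'X - t%:P)))); last first.
  rewrite derivZ deriv_comp deriv_prim derivB derivC subr0 derivZ derivX.
  by rewrite -scalerAr mulr1 scalerA mulVf // scale1r.
rewrite /pint !hornerZ !horner_comp !hornerD !hornerN !hornerZ !hornerX !hornerC.
ring.
Qed.

End PolyIntegral.

Section Legendre.
Variable R : realFieldType.
Local Notation P n := (legendre R n).
Implicit Types q u v : {poly R}.

Lemma legendre0 : P 0 = 1. Proof. by []. Qed.
Lemma legendre1 : P 1 = 'X. Proof. by []. Qed.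

Lemma legendreSS n :
  P n.+2 *+ n.+2 = 'X * P n.+1 *+ (2 * n + 3) - P n *+ n.+1.
Proof.
rewrite /legendre /=; case: (legpair R n) => p q /=.
by rewrite -scaler_nat scalerA mulfV ?pnatr_eq0 // scale1r !scaler_nat.
Qed.

Lemma legendre_deriv_rec n :
  [/\ (P n.+1)^`() = 'X * (P n)^`() + n.+1%:R * P n,
      'X * (P n.+1)^`() - (P n)^`() = n.+1%:R * P n.+1 &
      ('X^2 - 1) * (P n.+1)^`() = n.+1%:R * ('X * P n.+1 - P n)].
Proof.
elim: n => [|n [dA dB dC]].
  by rewrite legendre1 legendre0 derivX derivC; split; ring.
have rec : n.+2%:R * P n.+2 = (2 * n + 3)%:R * ('X * P n.+1) - n.+1%:R * P n.
  by rewrite !mulr_natl legendreSS.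
have drec := congr1 deriv (legendreSS n).
rewrite derivB !derivMn derivM derivX mul1r in drec.
have dA' : (P n.+2)^`() = 'X * (P n.+1)^`() + n.+2%:R * P n.+1.
  apply: (@mulfI _ n.+2%:R); first by rewrite -polyC_natr polyC_eq0 pnatr_eq0.
  have dPn : (P n)^`() = 'X * (P n.+1)^`() - n.+1%:R * P n.+1 by rewrite -dB; ring.
  by rewrite mulr_natl drec dPn; ring.
split=> //.
  have -> : 'X * (P n.+2)^`() - (P n.+1)^`()
      = ('X^2 - 1) * (P n.+1)^`() + n.+2%:R * ('X * P n.+1) by rewrite dA'; ring.
  by rewrite dC rec; ring.
have -> : ('X^2 - 1) * (P n.+2)^`()
    = 'X * (('X^2 - 1) * (P n.+1)^`()) + n.+2%:R * ('X^2 - 1) * P n.+1.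
  by rewrite dA'; ring.
have -> : n.+2%:R * ('X * P n.+2 - P n.+1)
    = 'X * (n.+2%:R * P n.+2) - n.+2%:R * P n.+1 by ring.
by rewrite dC rec; ring.
Qed.

Lemma horner_legendreSS n x :
  (P n.+2).[x] *+ n.+2 = x * (P n.+1).[x] *+ (2 * n + 3) - (P n).[x] *+ n.+1.
Proof.
by rewrite -hornerMn legendreSS hornerD hornerN !hornerMn hornerM hornerX.
Qed.

Lemma legendre_endpoints n : (P n).[1] = 1 /\ (P n).[-1] = (-1) ^+ n.
Proof.
suff [] : [/\ (P n).[1] = 1, (P n).[-1] = (-1) ^+ n,
              (P n.+1).[1] = 1 & (P n.+1).[-1] = (-1) ^+ n.+1] by [].
elim: n => [|n [IH0 IHm0 IH1 IHm1]]; first by rewrite legendre1 !hornerE.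
have nz : n.+2%:R != 0 :> R by rewrite pnatr_eq0.
split=> //; apply: (mulIf nz); rewrite !mulr_natr horner_legendreSS.
  by rewrite IH0 IH1; ring.
by rewrite IHm0 IHm1 !exprS; ring.
Qed.

Definition legendre_op (u : {poly R}) := (('X^2 - 1) * u^`())^`().

Lemma legendre_ode n : legendre_op (P n) = (n * n.+1)%:R *: P n.
Proof.
case: n => [|n]; first by rewrite /legendre_op legendre0 derivC mulr0 derivC scale0r.
have [_ dB dC] := legendre_deriv_rec n.
rewrite /legendre_op dC mulr_natl derivMn derivB derivM derivX mul1r.
have -> : P n.+1 + 'X * (P n.+1)^`() - (P n)^`() = P n.+1 + n.+1%:R * P n.+1.
  by rewrite -dB; ring.
by rewrite -mul_polyC polyC_natr; ring.
Qed.

Lemma pint_legendre_op_sym u v :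
  pint (legendre_op u * v) (-1) 1 = pint (u * legendre_op v) (-1) 1.
Proof.
have w_pm1 x : x ^+ 2 = 1 -> ('X^2 - 1 : {poly R}).[x] = 0.
  by move=> x2; rewrite !hornerE x2 subrr.
rewrite pint_by_parts [in RHS]mulrC pint_by_parts !hornerM.
rewrite !w_pm1 ?expr1n ?sqrrN ?expr1n // !mul0r.
by congr (_ - _); rewrite mulrAC.
Qed.

Lemma coef_legendre_op q i :
  (legendre_op q)`_i = q`_i * (i * i.+1)%:R - q`_i.+2 * (i.+2 * i.+1)%:R.
Proof.
rewrite /legendre_op coef_deriv mulrBl mul1r coefB coefXnM coef_deriv.
by case: i => [|i] /=; rewrite !coef_deriv ?subSS ?subn0 !natrM; ring.
Qed.

(* [P n] is an eigenvector of the self-adjoint [legendre_op] for n(n+1), while on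
   a [q] of degree d < n the operator acts as d(d+1) up to lower degree terms. *)
Lemma legendre_orth n q : (size q <= n)%N -> pint (P n * q) (-1) 1 = 0.
Proof.
suff orth d : (d <= n)%N ->
    forall q, (size q <= d)%N -> pint (P n * q) (-1) 1 = 0.
  exact: orth.
elim: d => [_ {}q|d IH lt_dn {}q le_qd].
  by rewrite leqn0 size_poly_eq0 => /eqP ->; rewrite mulr0 pint0.
pose mu : R := (d * d.+1)%:R.
have size_r : (size (legendre_op q - mu *: q)%R <= d)%N.
  apply/leq_sizeP => j le_dj; rewrite coefB coefZ coef_legendre_op.
  have -> : q`_j.+2 = 0 by rewrite nth_default // (leq_trans le_qd) // ltnW.
  rewrite mul0r subr0.
  case: (ltngtP d j) le_dj => // [lt_dj _|<- _]; last by rewrite mulrC subrr.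
  by rewrite nth_default ?(leq_trans le_qd lt_dj) // mul0r mulr0 subrr.
have := IH (ltnW lt_dn) _ size_r.
rewrite mulrBr pintB -scalerAr pintZ -pint_legendre_op_sym legendre_ode.
rewrite -scalerAl pintZ -mulrBl => /eqP; rewrite mulf_eq0 => /predU1P[|/eqP //].
move/eqP; rewrite subr_eq0 eqr_nat => /eqP eq_mu_lambda.
by have := ltn_mul lt_dn (lt_dn : d.+1 < n.+1)%N; rewrite eq_mu_lambda ltnn.
Qed.

Lemma size_legendre_le n : (size (P n) <= n.+1)%N.
Proof.
suff [] : (size (P n) <= n.+1)%N /\ (size (P n.+1) <= n.+2)%N by [].
elim: n => [|n [le_n le_n1]]; first by rewrite legendre1 size_polyX size_poly1.
split=> //; apply/leq_sizeP => j le_j.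
have /eqP := congr1 (coefp j) (legendreSS n).
rewrite /= coefB !coefMn coefXM; case: j le_j => // j le_j /=.
have [-> ->] : (P n.+1)`_j = 0 /\ (P n)`_j.+1 = 0.
  by split; apply: nth_default; [apply: leq_trans le_n1 _|apply: leq_trans le_n _]; lia.
by rewrite !mul0rn subr0 mulrn_eq0 => /eqP.
Qed.

Lemma lead_legendreS n : (P n.+1)`_n.+1 *+ n.+1 = (P n)`_n *+ (2 * n + 1).
Proof.
case: n => [|n]; first by rewrite legendre1 legendre0 coefX coefC.
have := congr1 (coefp n.+2) (legendreSS n).
rewrite /= coefB !coefMn coefXM /= [(P n)`_n.+2]nth_default ?mul0rn ?subr0 => [->|].
  by congr (_ *+ _); lia.
by apply: leq_trans (size_legendre_le n) _.
Qed.

Lemma lead_legendre_gt0 n : 0 < (P n)`_n.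
Proof.
elim: n => [|n IH]; first by rewrite legendre0 coefC ltr01.
by rewrite -(pmulrn_lgt0 _ (ltn0Sn n)) lead_legendreS pmulrn_lgt0 ?addn1.
Qed.

Lemma size_legendre n : size (P n) = n.+1.
Proof.
apply/anti_leq; rewrite size_legendre_le /= ltnNge; apply/negP => /leq_sizeP.
by move=> /(_ n (leqnn n)) /eqP; rewrite gt_eqF ?lead_legendre_gt0.
Qed.

Lemma legendre_norm n : pint (P n * P n) (-1) 1 = 2 / (2 * n + 1)%:R.
Proof.
have [dA _ _] := legendre_deriv_rec n.
have [[Pn1 Pnm1] [Pn11 Pn1m1]] := (legendre_endpoints n, legendre_endpoints n.+1).
pose I := pint ('X * (P n)^`() * P n) (-1) 1.
have sign2 : (-1) ^+ n * (-1) ^+ n = 1 :> R by rewrite -expr2 -exprM mulnC exprM sqrrN !expr1n.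
have eq1 : I + n.+1%:R * pint (P n * P n) (-1) 1 = 2.
  have orth : pint (P n.+1 * (P n)^`()) (-1) 1 = 0.
    by apply/legendre_orth/size_deriv_le/(leq_trans (size_legendre_le n)).
  have := pint_by_parts (P n.+1) (P n) (-1) 1.
  rewrite orth subr0 !hornerM Pn1 Pnm1 Pn11 Pn1m1 dA mulrDl pintD.
  rewrite -polyC_natr mul_polyC -scalerAl pintZ => ->.
  by rewrite exprS mulN1r mulNr sign2; ring.
have eq2 : pint (P n * P n) (-1) 1 + 2 * I = 2.
  have := pint_deriv ('X * (P n * P n)) (-1) 1.
  rewrite derivM derivX mul1r derivM !hornerM !hornerX Pn1 Pnm1 sign2.
  have -> : 'X * ((P n)^`() * P n + P n * (P n)^`()) = 2%:R *: ('X * (P n)^`() * P n).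
    by rewrite scaler_nat; ring.
  by rewrite pintD pintZ => ->; ring.
have nz : (2 * n + 1)%:R != 0 :> R by rewrite pnatr_eq0 addn1.
apply: (mulIf nz); rewrite divfK //.
have -> : (2 * n + 1)%:R = 2 * n.+1%:R - 1 :> R by rewrite natrD natrM mulrSr; ring.
transitivity (2 * (I + n.+1%:R * pint (P n * P n) (-1) 1)
               - (pint (P n * P n) (-1) 1 + 2 * I)); first ring.
by rewrite eq1 eq2; ring.
Qed.

End Legendre.

Section ShiftedLegendre.
Variables (R : realFieldType) (a b : R).
Hypothesis lt_ab : a < b.
Implicit Types q r w : {poly R}.

Local Notation P n := (legendre R n).
Local Notation S n := (shifted_legendre a b n).
Local Notation s := (2 / (b - a)).
Local Notation phi := (s *: 'X - ((a + b) / (b - a))%:P).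

Lemma shift_scale_neq0 : s != 0.
Proof. by rewrite mulf_neq0 ?invr_eq0 ?subr_eq0 ?pnatr_eq0 ?gt_eqF. Qed.

Lemma pint_shifted q : pint (q \Po phi) a b = (b - a) / 2 * pint q (-1) 1.
Proof.
have ba_neq0 : b - a != 0 by rewrite subr_eq0 gt_eqF.
rewrite pint_comp_affine ?shift_scale_neq0 //; congr (_ * pint q _ _); field => //.
Qed.

Lemma size_shift : size phi = 2.
Proof.
rewrite size_polyDl ?size_scale ?size_polyX ?shift_scale_neq0 //.
by rewrite size_polyN size_polyC; case: (_ != 0).
Qed.

Lemma size_shifted_legendre n : size (S n) = n.+1.
Proof. by rewrite /shifted_legendre size_comp_poly2 ?size_shift ?size_legendre. Qed.

Lemma lead_shifted_legendre n : (S n)`_n = (P n)`_n * s ^+ n.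
Proof.
have := lead_coef_comp (P n) (_ : 1 < size phi)%N; rewrite size_shift => /(_ isT).
rewrite /lead_coef size_shifted_legendre size_legendre size_shift /= => ->.
by rewrite coefB coefZ coefX coefC mulr1 subr0.
Qed.

Lemma shifted_legendre_orth n q : (size q <= n)%N -> pint (S n * q) a b = 0.
Proof.
move=> le_qn; pose psi := s^-1 *: ('X + ((a + b) / (b - a))%:P).
have psiK : psi \Po phi = 'X.
  rewrite comp_polyZ comp_polyD comp_polyX comp_polyC subrK.
  by rewrite scalerA mulVf ?shift_scale_neq0 ?scale1r.
have size_psi : size psi = 2.
  by rewrite size_scale ?size_XaddC ?invr_eq0 ?shift_scale_neq0.
rewrite -[q]comp_polyXr -psiK comp_polyA -comp_polyM pint_shifted legendre_orth ?mulr0 //.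
by rewrite size_comp_poly2.
Qed.

Lemma shifted_legendre_norm n : pint (S n * S n) a b = (b - a) / (2 * n + 1)%:R.
Proof.
rewrite -comp_polyM pint_shifted legendre_norm mulrA divfK //.
by rewrite pnatr_eq0.
Qed.

Lemma lead_shifted_legendre_neq0 n : (S n)`_n != 0.
Proof.
rewrite lead_shifted_legendre mulf_neq0 ?expf_neq0 ?shift_scale_neq0 //.
by rewrite gt_eqF ?lead_legendre_gt0.
Qed.

Lemma lead_shifted_legendre_ratio k : (0 < k)%N ->
  (S k.+1)`_k.+1 * (S k.-1)`_k.-1 * (k.+1 * (2 * k - 1))%:R
  = (S k)`_k ^+ 2 * (k * (2 * k + 1))%:R.
Proof.
case: k => // n _; rewrite !lead_shifted_legendre !exprS /=.
rewrite (_ : 2 * n.+1 - 1 = 2 * n + 1)%N; last by lia.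
transitivity (((P n.+2)`_n.+2 *+ n.+2) * ((P n)`_n *+ (2 * n + 1)) * (s * s ^+ n) ^+ 2).
  by rewrite natrM; ring.
by rewrite -lead_legendreS lead_legendreS natrM; ring.
Qed.

Lemma size_sub_shifted_legendre n w : (size w <= n.+1)%N ->
  (size (w - (w`_n / (S n)`_n) *: S n)%R <= n)%N.
Proof.
move=> le_wn; apply/leq_sizeP => j; rewrite leq_eqVlt coefB coefZ.
case/predU1P => [<-|lt_nj]; first by rewrite divfK ?lead_shifted_legendre_neq0 ?subrr.
rewrite [w`_j]nth_default ?[(S n)`_j]nth_default ?size_shifted_legendre ?mulr0 ?subrr //.
exact: (leq_trans le_wn lt_nj).
Qed.

(* Over an abstract real field positivity cannot come from analysis; it comes from
   expanding [r] in the orthogonal family [S 0], ..., [S d]. *)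
Lemma pint_sqr_gt0 r : r != 0 -> 0 < pint (r * r) a b.
Proof.
move: {2}(size r) (leqnn (size r)) => d; elim: d r => [r|d IH r le_rd r_neq0].
  by rewrite leqn0 size_poly_eq0 => /eqP ->; rewrite eqxx.
pose c := r`_d / (S d)`_d; pose r' := r - c *: S d.
have size_r' : (size r' <= d)%N by exact: size_sub_shifted_legendre.
have -> : pint (r * r) a b = c * c * ((b - a) / (2 * d + 1)%:R) + pint (r' * r') a b.
  have -> : r * r = (c * c) *: (S d * S d) + (c + c) *: (S d * r') + r' * r'.
    by rewrite /r' -!mul_polyC polyCD polyCM; ring.
  by rewrite !pintD !pintZ shifted_legendre_norm shifted_legendre_orth // mulr0 addr0.
have h_gt0 : 0 < (b - a) / (2 * d + 1)%:R by rewrite divr_gt0 ?subr_gt0 // ltr0n addn1.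
have cc_ge0 : 0 <= c * c by rewrite -expr2 sqr_ge0.
have [r'0|r'_neq0] := eqVneq r' 0; last first.
  by have := IH r' size_r' r'_neq0; have := mulr_ge0 cc_ge0 (ltW h_gt0); lra.
have c_neq0 : c != 0.
  apply: contra r_neq0 => /eqP c0.
  by rewrite -(subrK (c *: S d) r) -/r' r'0 c0 scale0r addr0.
by rewrite r'0 mulr0 pint0 addr0 mulr_gt0 // lt_def cc_ge0 andbT mulf_neq0.
Qed.

Lemma shifted_legendre_orthE n w : (size w <= n.+1)%N ->
  (forall q, (size q <= n)%N -> pint (w * q) a b = 0) ->
  w = (w`_n / (S n)`_n) *: S n.
Proof.
move=> le_wn w_orth; apply/eqP; rewrite -subr_eq0; apply/negPn/negP => r_neq0.
have size_r := size_sub_shifted_legendre le_wn.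
have := pint_sqr_gt0 r_neq0.
by rewrite {1}mulrBl -scalerAl pintB pintZ w_orth ?shifted_legendre_orth // mulr0 subrr ltxx.
Qed.

End ShiftedLegendre.

Lemma coefM_top (R : nzRingType) (u v : {poly R}) m n :
  (size u <= m.+1)%N -> (size v <= n.+1)%N -> (u * v)`_(m + n) = u`_m * v`_n.
Proof.
move=> le_um le_vn; rewrite coefM (bigD1 (Ordinal (leq_addr n m : m < (m + n).+1)%N)) //=.
rewrite addKn big1 ?addr0 // => -[j lt_j]; rewrite -val_eqE /= => neq_jm.
have [lt_jm|lt_mj|eq_jm] := ltngtP j m; last by rewrite eq_jm eqxx in neq_jm.
- by rewrite [v`_ _]nth_default ?mulr0 //; apply: leq_trans le_vn _; lia.
- by rewrite nth_default ?mul0r //; apply: leq_trans le_um _.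
Qed.

(* A single cell: [quad k x A i] and [Mstar x A w i] unfold to
   [cell_quad k (x i) (A i)] and [cell_mstar (x i) (A i) (w i)]. *)
Section Cell.
Variables (R : realFieldType) (k : nat) (x A : nat -> R).
Implicit Types p q g w : {poly R}.
Local Notation a := (x 0%N).
Local Notation b := (x k.+1).
Local Notation S n := (shifted_legendre a b n).

Definition cell_quad p := \sum_(j < k.+2) A j * p.[x j].
Definition cell_mstar p (j : nat) := p.[a] + \sum_(m < j.+1) A m * p^`().[x m].
Definition quad_err p := pint p a b - cell_quad p.

Lemma cell_quadD p q : cell_quad (p + q) = cell_quad p + cell_quad q.
Proof. by rewrite /cell_quad -big_split; apply: eq_bigr => j _; rewrite hornerD mulrDr. Qed.

Lemma cell_quadZ c p : cell_quad (c *: p) = c * cell_quad p.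
Proof. by rewrite /cell_quad mulr_sumr; apply: eq_bigr => j _; rewrite hornerZ mulrCA. Qed.

Lemma quad_errD p q : quad_err (p + q) = quad_err p + quad_err q.
Proof. by rewrite /quad_err pintD cell_quadD; ring. Qed.

Lemma quad_errZ c p : quad_err (c *: p) = c * quad_err p.
Proof. by rewrite /quad_err pintZ cell_quadZ; ring. Qed.

Lemma cell_mstarD p q j : cell_mstar (p + q) j = cell_mstar p j + cell_mstar q j.
Proof.
rewrite /cell_mstar hornerD addrACA -big_split; congr (_ + _).
by apply: eq_bigr => m _; rewrite derivD hornerD mulrDr.
Qed.

Lemma cell_mstarZ c p j : cell_mstar (c *: p) j = c * cell_mstar p j.
Proof.
rewrite /cell_mstar hornerZ mulrDr mulr_sumr; congr (_ + _).
by apply: eq_bigr => m _; rewrite derivZ hornerZ mulrCA.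
Qed.

Lemma cell_mstar0 j : cell_mstar 0 j = 0.
Proof. by rewrite -(scale0r 0) cell_mstarZ mul0r. Qed.

Lemma cell_mstarS w j : cell_mstar w j.+1 = cell_mstar w j + A j.+1 * w^`().[x j.+1].
Proof. by rewrite /cell_mstar big_ord_recr addrA. Qed.

Lemma cell_mstar_by_parts w (f : nat -> R) n :
  \sum_(j < n.+1) cell_mstar w j * (f j - f j.+1)
  = w.[a] * f 0%N + \sum_(j < n.+1) A j * f j * w^`().[x j] - cell_mstar w n * f n.+1.
Proof.
elim: n => [|n IH]; first by rewrite !big_ord1 /cell_mstar big_ord1; ring.
by rewrite big_ord_recr IH [in RHS]big_ord_recr cell_mstarS /=; ring.
Qed.

Hypothesis quad_exact : forall p, (size p <= 2 * k)%N -> quad_err p = 0.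

Lemma cell_mstar_last w : (size w <= k.+1)%N -> cell_mstar w k = w.[b] - A k.+1 * w^`().[b].
Proof.
move=> le_wk; have := quad_exact (leq_trans (size_deriv_le le_wk) (leq_pmull k (ltn0Sn 1))).
rewrite /quad_err pint_deriv /cell_quad big_ord_recr /= => /subr0_eq e.
rewrite /cell_mstar; have -> : w.[b] = w.[b] - w.[a] + w.[a] by ring.
by rewrite e; ring.
Qed.

Lemma cell_flux_identity w (f : nat -> R) : (size w <= k.+1)%N ->
  \sum_(j < k.+1) cell_mstar w j * (f j - f j.+1)
  = \sum_(j < k.+2) A j * f j * w^`().[x j] + w.[a] * f 0%N - w.[b] * f k.+1.
Proof.
by move=> le_wk; rewrite cell_mstar_by_parts cell_mstar_last // [in RHS]big_ord_recr /=; ring.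
Qed.

Lemma quad_err_top p :
  (size p <= (2 * k).+1)%N -> quad_err p = p`_(2 * k) * quad_err 'X^(2 * k).
Proof.
move=> le_pk; have size_rest : (size (p - p`_(2 * k) *: 'X^(2 * k))%R <= 2 * k)%N.
  apply/leq_sizeP => j; rewrite leq_eqVlt coefB coefZ coefXn.
  case/predU1P => [<-|lt_kj]; first by rewrite eqxx mulr1 subrr.
  by rewrite gtn_eqF // mulr0 subr0 nth_default // (leq_trans le_pk).
rewrite -quad_errZ -[p in LHS](subrK (p`_(2 * k) *: 'X^(2 * k))).
by rewrite quad_errD quad_exact ?add0r.
Qed.

(* [M^* w = 0] says A_0 w'(a) = -w(a) and A_j w'(x_j) = 0 for 0 < j <= k, so the
   quadrature of [w^`() * g] only sees the end points. *)
Lemma mstar_kernel_quad_errE w g : (forall j, (j <= k)%N -> cell_mstar w j = 0) ->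
  quad_err (w^`() * g) = g.[b] * (w.[b] - A k.+1 * w^`().[b]) - pint (w * g^`()) a b.
Proof.
move=> Mw0; have first_node : A 0%N * w^`().[a] = - w.[a].
  apply/eqP; rewrite -addr_eq0 addrC.
  by have := Mw0 0%N isT; rewrite /cell_mstar big_ord1 => ->.
have inner_nodes (j : 'I_k) : A j.+1 * w^`().[x j.+1] = 0.
  by have := cell_mstarS w j; rewrite !Mw0 ?(ltnW (ltn_ord j)) // add0r.
rewrite /quad_err pint_by_parts /cell_quad big_ord_recr big_ord_recl /=.
rewrite big1 => [|j _]; last by rewrite hornerM mulrA inner_nodes mul0r.
by rewrite !hornerM mulrA first_node; ring.
Qed.

Lemma mstar_kernel_quad_err w g : (size w <= k.+1)%N ->
  (forall j, (j <= k)%N -> cell_mstar w j = 0) ->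
  quad_err (w^`() * g) = - pint (w * g^`()) a b.
Proof.
move=> le_wk Mw0; have := mstar_kernel_quad_errE 1 Mw0.
rewrite mulr1 quad_exact ?(leq_trans (size_deriv_le le_wk) (leq_pmull k (ltn0Sn 1))) //.
rewrite derivC mulr0 pint0 hornerC mul1r subr0 => /esym end_node.
by rewrite mstar_kernel_quad_errE // end_node mulr0 sub0r.
Qed.

Lemma mstar_kernel_orth w q : (size w <= k.+1)%N ->
  (forall j, (j <= k)%N -> cell_mstar w j = 0) ->
  (size q <= k)%N -> pint (w * q) a b = 0.
Proof.
move=> le_wk Mw0 le_qk; apply/eqP; rewrite -[q]deriv_prim -oppr_eq0.
rewrite -mstar_kernel_quad_err // quad_exact //; apply: leq_trans (size_polyMleq _ _) _.
have := size_deriv_le le_wk; have := size_prim q; lia.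
Qed.

Hypothesis lt_ab : a < b.
Hypothesis k_gt0 : (0 < k)%N.
Hypothesis quad_stable :
  0 < (b - a) / (2 * k - 1)%N%:R - cell_quad (S k.+1 * S k.-1).

Lemma cell_quad_legendre_prod :
  cell_quad (S k.+1 * S k.-1) = - ((S k.+1)`_k.+1 * (S k.-1)`_k.-1 * quad_err 'X^(2 * k)).
Proof.
have size_prod : (size (S k.+1 * S k.-1)%R <= (2 * k).+1)%N.
  by apply: leq_trans (size_polyMleq _ _) _; rewrite !size_shifted_legendre; lia.
have := quad_err_top size_prod; rewrite {1}/quad_err.
rewrite shifted_legendre_orth ?size_shifted_legendre ?prednK // sub0r.
have -> : (2 * k = k.+1 + k.-1)%N by lia.
by rewrite coefM_top ?size_shifted_legendre ?prednK // => <-; rewrite opprK.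
Qed.

Lemma mstar_kernel_shifted_legendre w : (size w <= k.+1)%N ->
  (forall j, (j <= k)%N -> cell_mstar w j = 0) -> w = (w`_k / (S k)`_k) *: S k.
Proof.
move=> le_wk Mw0; apply: (shifted_legendre_orthE lt_ab le_wk) => q.
exact: mstar_kernel_orth.
Qed.

Lemma mstar_kernel_quad_err_top w : (size w <= k.+1)%N ->
  (forall j, (j <= k)%N -> cell_mstar w j = 0) ->
  w`_k *+ k * (w`_k / k.+1%:R) * quad_err 'X^(2 * k) = - pint (w * w) a b.
Proof.
move=> le_wk Mw0; have := mstar_kernel_quad_err (prim w) le_wk Mw0; rewrite deriv_prim => <-.
have size_dw : (size w^`() <= k.-1.+1)%N by rewrite prednK // size_deriv_le.
have size_pw : (size (prim w) <= k.+2)%N by apply: leq_trans (size_prim w) _; rewrite ltnS.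
rewrite [RHS]quad_err_top; last first.
  by apply: leq_trans (size_polyMleq _ _) _; move: size_dw size_pw; lia.
rewrite (_ : 2 * k = k.-1 + k.+1)%N; last by lia.
by rewrite coefM_top // coef_deriv prednK // coef_prim.
Qed.

Lemma cell_mstar_inj w : (size w <= k.+1)%N ->
  (forall j, (j <= k)%N -> cell_mstar w j = 0) -> w = 0.
Proof.
move=> le_wk Mw0; have := mstar_kernel_quad_err_top le_wk Mw0.
have wE := mstar_kernel_shifted_legendre le_wk Mw0; set c := _ / _ in wE.
have [c0|c_neq0] := eqVneq c 0; first by rewrite wE c0 scale0r.
pose rho := quad_err 'X^(2 * k); pose sigma n := (S n)`_n.
have lead_w : w`_k = c * sigma k by rewrite {1}wE coefZ.
have norm_w : pint (w * w) a b = c * (c * ((b - a) / (2 * k + 1)%:R)).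
  by rewrite wE -scalerAl -scalerAr !pintZ shifted_legendre_norm.
rewrite norm_w lead_w -/rho => E.
have rho_eq : sigma k ^+ 2 * rho * (k * (2 * k + 1))%:R = - (b - a) * k.+1%:R.
  apply: (mulfI (mulf_neq0 c_neq0 c_neq0)).
  transitivity (c * sigma k *+ k * (c * sigma k / k.+1%:R) * rho * (k.+1 * (2 * k + 1))%:R).
    by field; rewrite -mulrS pnatr_eq0.
  by rewrite E; field; rewrite -natrM natr1 pnatr_eq0.
have prod_eq : sigma k.+1 * sigma k.-1 * rho * (2 * k - 1)%:R = - (b - a).
  apply: (mulIf (_ : k.+1%:R != 0)); first by rewrite pnatr_eq0.
  transitivity (sigma k.+1 * sigma k.-1 * (k.+1 * (2 * k - 1))%:R * rho).
    by rewrite natrM; ring.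
  rewrite lead_shifted_legendre_ratio // -/(sigma k) -rho_eq; ring.
have odd_neq0 : (2 * k - 1)%:R != 0 :> R by rewrite pnatr_eq0 -lt0n; lia.
move: quad_stable; rewrite cell_quad_legendre_prod -/rho opprK.
suff -> : (b - a) / (2 * k - 1)%:R + sigma k.+1 * sigma k.-1 * rho = 0 by rewrite ltxx.
by apply: (mulIf odd_neq0); rewrite mul0r mulrDl divfK // prod_eq addrN.
Qed.

Definition mstar_mx : 'M[R]_k.+1 := \matrix_(l, j) cell_mstar 'X^l j.

Lemma cell_mstar_rVpoly (v : 'rV_k.+1) (j : 'I_k.+1) :
  cell_mstar (rVpoly v) j = (v *m mstar_mx) 0 j.
Proof.
rewrite mxE {1}(row_sum_delta v) linear_sum.
rewrite (big_morph (cell_mstar^~ j) (fun p q => cell_mstarD p q j) (cell_mstar0 j)).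
by apply: eq_bigr => l _; rewrite linearZ /= rVpoly_delta cell_mstarZ mxE.
Qed.

Lemma mstar_mx_unit : mstar_mx \in unitmx.
Proof.
rewrite -row_free_unit; apply/inj_row_free => v v0.
have : rVpoly v = 0.
  apply: cell_mstar_inj (size_poly _ _) _ => j le_jk.
  by rewrite (cell_mstar_rVpoly v (Ordinal (le_jk : j < k.+1)%N)) v0 mxE.
by move/(congr1 (@poly_rV _ k.+1)); rewrite rVpolyK linear0.
Qed.

Lemma cell_mstar_surj (t : nat -> R) :
  exists2 w : {poly R}, (size w <= k.+1)%N & forall j, (j <= k)%N -> cell_mstar w j = t j.
Proof.
exists (rVpoly ((\row_(j < k.+1) t j) *m invmx mstar_mx)); first exact: size_poly.
move=> j le_jk; rewrite (cell_mstar_rVpoly _ (Ordinal (le_jk : j < k.+1)%N)).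
by rewrite mulmxKV ?mstar_mx_unit // mxE.
Qed.

End Cell.

Lemma lt_first_last (R : realFieldType) (k : nat) (y : nat -> R) :
  (forall j, (j <= k)%N -> y j < y j.+1) -> y 0%N < y k.+1.
Proof.
move=> lt_y; elim: k lt_y => [|k IH] lt_y; first exact: lt_y.
by apply: lt_trans (IH _) (lt_y _ _) => // j le_jk; apply: lt_y; rewrite ltnW ?ltnS.
Qed.

Theorem theorem3p11 (R : realFieldType) (N k : nat)
  (x A : 'I_N -> nat -> R) (ut : 'I_N -> {poly R})
  (fhat : 'I_N -> nat -> R) (fI : nat -> R) :
  (* geometry: strictly increasing subdivision points in each cell, cells contiguous *)
  (forall (i : 'I_N) (j : nat), (j <= k)%N -> x i j < x i j.+1) ->
  (forall i i' : 'I_N, nat_of_ord i' = (nat_of_ord i).+1 -> x i k.+1 = x i' 0%N) ->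
  (* Assumption (S) *)
  (1 <= k)%N ->
  (forall (i : 'I_N) (p : {poly R}), (size p <= 2 * k)%N ->
     pint p (x i 0%N) (x i k.+1) - quad k x A i p = 0) ->
  (forall i : 'I_N,
     0 < (x i k.+1 - x i 0%N) / (2 * k - 1)%N%:R
         - quad k x A i (shifted_legendre (x i 0%N) (x i k.+1) k.+1
                         * shifted_legendre (x i 0%N) (x i k.+1) k.-1)) ->
  (* (u_h)_t in V^k *)
  (forall i : 'I_N, (size (ut i) <= k.+1)%N) ->
  (* fhat_{i,0} = fhat_{i-1/2}, fhat_{i,k+1} = fhat_{i+1/2} (interface fluxes fI) *)
  (forall i : 'I_N, fhat i 0%N = fI i /\ fhat i k.+1 = fI i.+1) ->
  (forall ws : 'I_N -> nat -> R,
     l2_star k x ut ws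
     = \sum_(i < N) \sum_(j < k.+1) ws i j * (fhat i j - fhat i j.+1))
  <->
  (forall w : 'I_N -> {poly R}, (forall i : 'I_N, (size (w i) <= k.+1)%N) ->
     ip_star k x A ut w
     = \sum_(i < N) (quad_flux k x A fhat w i
                     + (w i).[x i 0%N] * fI i - (w i).[x i k.+1] * fI i.+1)).
Proof.
move=> lt_x _ k_gt0 quad_exact quad_stable _ fhat_ends.
have flux (w : 'I_N -> {poly R}) i : (size (w i) <= k.+1)%N ->
    \sum_(j < k.+1) Mstar x A w i j * (fhat i j - fhat i j.+1)
    = quad_flux k x A fhat w i + (w i).[x i 0%N] * fI i - (w i).[x i k.+1] * fI i.+1.
  by move=> le_wk; have [<- <-] := fhat_ends i; exact: (cell_flux_identity (quad_exact i)).
split=> [HL w le_wk | HR ws].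
  by rewrite /ip_star HL; apply: eq_bigr => i _; rewrite flux.
have [W le_Wk MW] := fin_all_exists2 (fun i =>
  cell_mstar_surj (quad_exact i) (lt_first_last (lt_x i)) k_gt0 (quad_stable i) (ws i)).
have -> : l2_star k x ut ws = ip_star k x A ut W.
  by apply: eq_bigr => i _; apply: eq_bigr => j _; rewrite -MW // -ltnS.
rewrite HR //; apply: eq_bigr => i _; rewrite -flux //.
by apply: eq_bigr => j _; rewrite -MW // -ltnS.
Qed.
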